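(* Let $\varphi:\Lambda\to\Gamma$ be a regular covering map of finite simplicial graphs without isolated vertices. Then the group $\mathrm{FD}(\varphi)$ is commensurable to a subgroup of the Torelli group $\mathrm{IA}(A_\Lambda)$. More precisely, $\mathrm{FD}(\varphi)/(\mathrm{FD}(\varphi)\cap\mathrm{IA}(A_\Lambda))$ is isomorphic to $\mathrm{Deck}(\varphi)$.
   Context: Graphs are finite simplicial graphs; $A_\Gamma=\langle v\in V\Gamma\mid [u,v]=1\text{ for every edge }\{u,v\}\rangle$ is the right-angled Artin group. A covering map of graphs $\varphi:\Lambda\to\Gamma$ is a surjective simplicial map that maps the neighbours of each vertex $u$ bijectively onto the neighbours of $\varphi(u)$; $\mathrm{Deck}(\varphi)$ is the group of graph automorphisms $\mu$ of $\Lambda$ with $\varphi\mu=\varphi$, regarded as a subgroup of $\mathrm{Aut}(A_\Lambda)$ by permuting generators; $\varphi$ is regular if $\mathrm{Deck}(\varphi)$ acts transitively on each fiber. Let $\phi:A_\Lambda\to A_\Gamma$ be the induced homomorphism $u\mapsto\varphi(u)$. $\mathrm{FD}(\varphi)$ is the group of all $F\in\mathrm{Aut}(A_\Lambda)$ with $\phi\circ F=\phi$ (lifts of the identity of $A_\Gamma$). $\mathrm{IA}(A_\Lambda)$ is the kernel of the natural map $\mathrm{Aut}(A_\Lambda)\to\mathrm{GL}(H_1(A_\Lambda))$ given by the action on the abelianization. *)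

From mathcomp Require Import all_boot all_algebra all_fingroup.
Set Implicit Arguments. Unset Strict Implicit. Unset Printing Implicit Defensive.

Definition simple_graph (T : finType) (e : rel T) : Prop :=
  symmetric e /\ irreflexive e.

Definition no_isolated (T : finType) (e : rel T) : Prop :=
  forall u, exists v, e u v.

Definition covering_map (TL TG : finType) (eL : rel TL) (eG : rel TG)
    (f : TL -> TG) : Prop :=
  (forall y, exists x, f x = y) /\
  (forall u v, eL u v -> eG (f u) (f v)) /\
  (forall u, {in [pred v | eL u v] &, injective f}) /\
  (forall u w, eG (f u) w -> exists v, eL u v /\ f v = w).

Definition deck (TL TG : finType) (eL : rel TL) (f : TL -> TG) : {set {perm TL}} :=
  [set mu : {perm TL} | [forall u, forall v, eL (mu u) (mu v) == eL u v]
                         && [forall u, f (mu u) == f u]].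

Definition regular_covering (TL TG : finType) (eL : rel TL) (eG : rel TG)
    (f : TL -> TG) : Prop :=
  covering_map eL eG f /\
  forall u v, f u = f v -> exists2 mu, mu \in deck eL f & mu u = v.

(* Words in the generators V and their inverses: (x, false) = x, (x, true) = x^-1. *)
Definition word (T : Type) := seq (T * bool).

Definition winv (T : Type) (w : word T) : word T :=
  rev (map (fun p => (p.1, ~~ p.2)) w).

(* Equality in A_Gamma = < V | [u,v] = 1 for edges {u,v} >: the congruence on
   words generated by free cancellation and commutation of adjacent letters. *)
Inductive raag_eq (T : Type) (e : rel T) : word T -> word T -> Prop :=
| raag_refl w : raag_eq e w w
| raag_sym w1 w2 : raag_eq e w1 w2 -> raag_eq e w2 w1
| raag_trans w1 w2 w3 : raag_eq e w1 w2 -> raag_eq e w2 w3 -> raag_eq e w1 w3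
| raag_cancel w1 w2 x b :
    raag_eq e (w1 ++ [:: (x, b); (x, ~~ b)] ++ w2) (w1 ++ w2)
| raag_comm w1 w2 x y b c : e x y ->
    raag_eq e (w1 ++ [:: (x, b); (y, c)] ++ w2) (w1 ++ [:: (y, c); (x, b)] ++ w2).

Definition wsubst (T S : Type) (F : T -> word S) (w : word T) : word S :=
  flatten (map (fun p => if p.2 then winv (F p.1) else F p.1) w).

(* F : V -> A_Gamma (given by representative words) defines an endomorphism
   of A_Gamma iff the defining relations are preserved. *)
Definition raag_endo (T : Type) (e : rel T) (F : T -> word T) : Prop :=
  forall x y, e x y -> raag_eq e (F x ++ F y) (F y ++ F x).

Definition raag_aut (T : Type) (e : rel T) (F : T -> word T) : Prop :=
  raag_endo e F /\
  exists G, raag_endo e G /\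
    (forall x, raag_eq e (wsubst G (F x)) [:: (x, false)]) /\
    (forall x, raag_eq e (wsubst F (G x)) [:: (x, false)]).

Definition aut_eq (T : Type) (e : rel T) (F G : T -> word T) : Prop :=
  forall x, raag_eq e (F x) (G x).

Definition aut_comp (T : Type) (F G : T -> word T) : T -> word T :=
  fun x => wsubst F (G x).

Definition perm_aut (T : finType) (mu : {perm T}) : T -> word T :=
  fun x => [:: (mu x, false)].

Definition FD (TL TG : finType) (eL : rel TL) (eG : rel TG) (f : TL -> TG)
    (F : TL -> word TL) : Prop :=
  raag_aut eL F /\
  forall u, raag_eq eG (map (fun p => (f p.1, p.2)) (F u)) [:: (f u, false)].

(* Exponent sum of generator v in a word: the v-coordinate of its image in
   H_1(A_Gamma) = Z^V. *)
Definition expsum (T : eqType) (v : T) (w : word T) : int :=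
  \sum_(p <- w | p.1 == v) (if p.2 then (-1)%R else 1%R).

(* IA(A_Gamma): automorphisms acting trivially on H_1(A_Gamma) = Z^V. *)
Definition IA (T : finType) (e : rel T) (F : T -> word T) : Prop :=
  raag_aut e F /\
  forall u v, expsum v (F u) = (if u == v then 1%R else 0%R).

(** An automorphism F in FD(phi) acts on H_1(A_Lambda) = Z^Lambda by the integer
  matrix M with M a u the exponent sum of a in F u.  Since phi o F = phi, the
  column u of M sums to 1 over the fibre of phi u and to 0 over every other
  fibre.  Since F u and F v commute for adjacent u, v, a linking number of
  words shows that the 2x2 minor of the columns u, v vanishes on rows a, b that
  are distinct and non-adjacent.  M is invertible, so every edge has a non-zero
  minor, and the rows of a non-zero minor are adjacent.  Local injectivity of
  the covering then leaves a single non-zero entry, equal to 1, in each column,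
  so M is the permutation matrix of a deck transformation.  F |-> that deck
  transformation is a homomorphism.  It is onto because deck transformations lie
  in FD, and its kernel is FD \cap IA. *)

From mathcomp Require Import all_boot all_algebra all_fingroup.
From mathcomp Require Import ring.
Set Implicit Arguments.
Unset Strict Implicit.
Unset Printing Implicit Defensive.
Import GRing.Theory.
Local Open Scope ring_scope.

Lemma homo_perm_relE (T : finType) (e : rel T) (s : {perm T}) :
  {homo s : u v / e u v} -> forall u v, e (s u) (s v) = e u v.
Proof.
move=> es u v; apply/idP/idP; last exact: es.
have esX k x y : e x y -> e ((s ^+ k)%g x) ((s ^+ k)%g y).
  by elim: k x y => [|k IH] x y; rewrite ?expg0 ?perm1 // expgSr !permM => /IH/es.
move=> /(esX #[s]%g.-1); rewrite -!permM -expgS (prednK (order_gt0 s)).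
by rewrite expg_order !perm1.
Qed.

Section CoveringMatrix.

Variables (T TG : finType) (e : rel T) (f : T -> TG) (M N : T -> T -> int).

Definition minor u v a b := M a u * M b v - M b u * M a v.

Lemma minor_plucker u v p q r :
  M p u * minor u v q r = M q u * minor u v p r - M r u * minor u v p q.
Proof. by rewrite /minor; ring. Qed.

Hypothesis e_irr : irreflexive e.
Hypothesis e_sym : symmetric e.
Hypothesis e_noiso : forall u, exists v, e u v.
Hypothesis f_edge : forall a b, e a b -> f a != f b.
Hypothesis f_locinj : forall d, {in e d &, injective f}.
Hypothesis minor_nonadj :
  forall u v a b, e u v -> a != b -> ~~ e a b -> minor u v a b = 0.
Hypothesis M_fiber : forall u z, \sum_(a | f a == z) M a u = (f u == z)%:R.
Hypothesis NM_id : forall x b, \sum_a N b a * M a x = (x == b)%:R.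

Lemma minor_neq0_adj u v a b : e u v -> minor u v a b != 0 -> e a b.
Proof.
move=> euv; case: (eqVneq a b) => [<-|nab]; first by rewrite /minor subrr eqxx.
by apply: contraNT => eab; rewrite minor_nonadj.
Qed.

Lemma sum_minor u v : u != v ->
  \sum_a \sum_b N u a * N v b * minor u v a b = 1.
Proof.
move=> nuv.
(* Cauchy-Binet for the 2x2 minor of N M = 1 on rows and columns u, v. *)
have -> : \sum_a \sum_b N u a * N v b * minor u v a b =
    (\sum_a N u a * M a u) * (\sum_b N v b * M b v)
  - (\sum_a N u a * M a v) * (\sum_b N v b * M b u).
  rewrite !mulr_suml -sumrB; apply: eq_bigr => a _.
  by rewrite !mulr_sumr -sumrB; apply: eq_bigr => b _; rewrite /minor; ring.
by rewrite !NM_id !eqxx (negbTE nuv) eq_sym (negbTE nuv) mulr0 subr0 mulr1.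
Qed.

Lemma edge_minor_neq0 u v : e u v -> exists a b, minor u v a b != 0.
Proof.
move=> euv; case: (pickP (fun ab : T * T => minor u v ab.1 ab.2 != 0)).
  by move=> [a b] ab; exists a, b.
move=> minor0; have nuv : u != v by apply: contraTneq euv => ->; rewrite e_irr.
have := sum_minor nuv; rewrite big1 => [/esym/eqP|a _]; first by rewrite oner_eq0.
by rewrite big1 // => b _; rewrite (eqP (negbFE (minor0 (a, b)))) mulr0.
Qed.

Lemma row_minor_neq0 u v a : e u v -> M a u != 0 -> exists d, minor u v a d != 0.
Proof.
move=> euv Mau; have [b [c mbc]] := edge_minor_neq0 euv.
have := minor_plucker u v a b c.
case: (eqVneq (minor u v a c) 0) => [->|]; last by exists c.
case: (eqVneq (minor u v a b) 0) => [->|]; last by exists b.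
by move=> /eqP; rewrite !mulr0 subrr mulf_eq0 (negbTE Mau) (negbTE mbc).
Qed.

Lemma fiber_support_uniq u a a' :
  f a = f a' -> M a u != 0 -> M a' u != 0 -> a = a'.
Proof.
(* Otherwise the Plucker relation makes a and a' adjacent to a common d. *)
move=> faa' Mau Ma'u; case: (eqVneq a a') => // naa'.
have [v euv] := e_noiso u.
have [d mad] := row_minor_neq0 euv Mau.
have ma'd : minor u v a' d != 0.
  have ma'a : minor u v a' a = 0.
    have na'a : ~~ e a' a by apply/negP => /f_edge; rewrite faa' eqxx.
    by rewrite minor_nonadj // eq_sym.
  have := minor_plucker u v a' a d; rewrite ma'a mulr0 subr0 => /esym/eqP.
  apply: contraTneq => ->; rewrite mulr0 eq_sym mulf_eq0.
  by rewrite (negbTE Ma'u) (negbTE mad).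
have eda : e d a by rewrite e_sym (minor_neq0_adj euv mad).
have eda' : e d a' by rewrite e_sym (minor_neq0_adj euv ma'd).
exact: f_locinj eda eda' faa'.
Qed.

Lemma fiber_sum_support u a :
  M a u != 0 -> \sum_(b | f b == f a) M b u = M a u.
Proof.
move=> Mau; rewrite (bigD1 a) //= big1 ?addr0 // => b /andP[/eqP fba nba].
apply/eqP; apply: contraNT nba => Mbu.
by apply/eqP; apply: fiber_support_uniq Mbu Mau.
Qed.

Lemma column_delta u : exists a, f a = f u /\ forall b, M b u = (a == b)%:R.
Proof.
have [a /andP[/eqP fau Mau]] : exists a, (f a == f u) && (M a u != 0).
  case: (pickP (fun a => (f a == f u) && (M a u != 0))) => [a ?|M0].
    by exists a.
  have := M_fiber u (f u); rewrite eqxx big1 => [/eqP|a fau].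
    by rewrite eq_sym oner_eq0.
  by move: (M0 a); rewrite fau => /negbFE/eqP.
have Mau1 : M a u = 1 by rewrite -fiber_sum_support // fau M_fiber eqxx.
exists a; split=> // b; case: (eqVneq a b) => [<- //|nab].
apply/eqP; apply: contraNT nab => Mbu.
have fbu : f b = f u.
  apply/eqP; move: (M_fiber u (f b)); rewrite fiber_sum_support // => Mbu1.
  by apply: contraTT Mbu => fbu; rewrite Mbu1 (eq_sym (f u)) (negbTE fbu).
apply/eqP; apply: (fiber_support_uniq (u := u));
by rewrite ?fau ?fbu ?Mau1 ?oner_eq0.
Qed.

Lemma covering_matrix_perm : exists s : {perm T},
  [/\ forall u a, M a u = (s u == a)%:R, forall u, f (s u) = f u
    & forall u v, e (s u) (s v) = e u v].
Proof.
have [s0 s0P] := fin_all_exists column_delta.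
have Ms0 u a : M a u = (s0 u == a)%:R by have [_ ->] := s0P u.
have NMs0 b x : N b (s0 x) = (x == b)%:R.
  rewrite -NM_id; under eq_bigr => a _ do rewrite Ms0.
  rewrite (bigD1 (s0 x)) //= eqxx mulr1 big1 ?addr0 // => a na.
  by rewrite eq_sym (negbTE na) mulr0.
have s0_inj : injective s0.
  by move=> x y s0xy; have := NMs0 y x; rewrite s0xy NMs0 eqxx; case: eqP.
exists (perm s0_inj); split=> [u a|u|]; rewrite ?permE; first exact: Ms0.
  by have [] := s0P u.
apply: homo_perm_relE => u v euv; rewrite !permE.
apply: (minor_neq0_adj euv); rewrite /minor !Ms0 !eqxx.
rewrite !(inj_eq s0_inj); case: (u =P v) => [uv|_].
  by rewrite uv e_irr in euv.
by rewrite mul0r subr0 mulr1 oner_eq0.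
Qed.

End CoveringMatrix.

Definition letter_sign (T : Type) (p : T * bool) : int := if p.2 then -1 else 1.

Lemma expsumE (T : eqType) (v : T) (w : word T) :
  expsum v w = \sum_(p <- w) letter_sign p * (p.1 == v)%:R.
Proof.
rewrite /expsum big_mkcond; apply: eq_bigr => p _.
by case: (p.1 == v); rewrite ?mulr1 ?mulr0.
Qed.

Lemma expsum_nil (T : eqType) (v : T) : expsum v [::] = 0.
Proof. by rewrite expsumE big_nil. Qed.

Lemma expsum_cons (T : eqType) (v : T) p (w : word T) :
  expsum v (p :: w) = letter_sign p * (p.1 == v)%:R + expsum v w.
Proof. by rewrite !expsumE big_cons. Qed.

Lemma expsum_gen (T : eqType) (x v : T) : expsum v [:: (x, false)] = (x == v)%:R.
Proof. by rewrite expsum_cons expsum_nil mul1r addr0. Qed.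

Lemma expsum_cat (T : eqType) (v : T) (w1 w2 : word T) :
  expsum v (w1 ++ w2) = expsum v w1 + expsum v w2.
Proof. by rewrite !expsumE big_cat. Qed.

Lemma expsum_winv (T : eqType) (v : T) (w : word T) :
  expsum v (winv w) = - expsum v w.
Proof.
rewrite /winv !expsumE big_rev big_map -sumrN; apply: eq_bigr => -[x [|]] _;
by rewrite /letter_sign /= mulNr ?opprK.
Qed.

Lemma sum_letters_expsum (T : finType) (w : word T) (g : T -> int) :
  \sum_(p <- w) letter_sign p * g p.1 = \sum_b expsum b w * g b.
Proof.
elim: w => [|p w IH].
  by rewrite big_nil big1 // => b _; rewrite expsum_nil mul0r.
under [RHS]eq_bigr => b _ do rewrite expsum_cons mulrDl.
rewrite big_cons IH big_split /=; congr (_ + _).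
rewrite (bigD1 p.1) //= eqxx mulr1 big1 ?addr0 // => b nb.
by rewrite eq_sym (negbTE nb) mulr0 mul0r.
Qed.

Lemma expsum_map (T TG : finType) (f : T -> TG) (z : TG) (w : word T) :
  expsum z (map (fun p => (f p.1, p.2)) w) = \sum_(a | f a == z) expsum a w.
Proof.
rewrite expsumE big_map (sum_letters_expsum w (fun a => (f a == z)%:R)).
rewrite [RHS]big_mkcond; apply: eq_bigr => a _.
by case: (f a == z); rewrite ?mulr1 ?mulr0.
Qed.

Lemma expsum_wsubst (T : finType) (F : T -> word T) (v : T) (w : word T) :
  expsum v (wsubst F w) = \sum_b expsum b w * expsum v (F b).
Proof.
rewrite -sum_letters_expsum.
elim: w => [|p w IH]; first by rewrite big_nil expsum_nil.
rewrite big_cons -IH /wsubst /= expsum_cat; congr (_ + _).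
by rewrite /letter_sign; case: p.2; rewrite ?expsum_winv ?mulN1r ?mul1r.
Qed.

Lemma raag_eq_expsum (T : eqType) (e : rel T) (v : T) (w1 w2 : word T) :
  raag_eq e w1 w2 -> expsum v w1 = expsum v w2.
Proof.
elim=> {w1 w2} [//|w1 w2 _ -> //|w1 w2 w3 _ -> _ -> //|w1 w2 x b|w1 w2 x y b c _];
by rewrite !expsum_cat !expsum_cons expsum_nil /letter_sign /=; case: b => /=; ring.
Qed.

Fixpoint linking (T : eqType) (a b : T) (w : word T) : int :=
  if w is p :: w' then letter_sign p * (p.1 == a)%:R * expsum b w' + linking a b w'
  else 0.

Lemma linking_cat (T : eqType) (a b : T) (w1 w2 : word T) :
  linking a b (w1 ++ w2) =
    linking a b w1 + linking a b w2 + expsum a w1 * expsum b w2.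
Proof.
elim: w1 => [|p w1 IH] /=; first by rewrite expsum_nil; ring.
by rewrite IH expsum_cat expsum_cons; ring.
Qed.

Lemma linking_pair (T : eqType) (a b : T) p q :
  linking a b [:: p; q] =
    letter_sign p * letter_sign q * ((p.1 == a) && (q.1 == b))%:R.
Proof. by rewrite /= expsum_cons expsum_nil -mulnb natrM; ring. Qed.

Lemma linking_congr (T : eqType) (a b : T) (w1 m m' w2 : word T) :
  linking a b m = linking a b m' ->
  expsum a m = expsum a m' -> expsum b m = expsum b m' ->
  linking a b (w1 ++ m ++ w2) = linking a b (w1 ++ m' ++ w2).
Proof. by move=> lm am bm; rewrite !linking_cat !expsum_cat lm am bm. Qed.

Lemma raag_eq_linking (T : eqType) (e : rel T) (a b : T) (w1 w2 : word T) :
  symmetric e -> a != b -> ~~ e a b ->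
  raag_eq e w1 w2 -> linking a b w1 = linking a b w2.
Proof.
move=> e_sym nab eab.
have no_ab z z' : e z z' -> (z == a) && (z' == b) = false.
  by move=> ezz'; apply: contraTF ezz' => /andP[/eqP -> /eqP ->].
elim=> {w1 w2} [//|w1 w2 _ -> //|w1 w2 w3 _ -> _ -> //|w1 w2 x c|w1 w2 x y c d exy].
- rewrite -[w1 ++ w2]/(w1 ++ [::] ++ w2); apply: linking_congr.
  + rewrite linking_pair /=.
    have -> : (x == a) && (x == b) = false.
      by apply: contraNF nab => /andP[/eqP <- /eqP <-].
    by rewrite mulr0.
  + by rewrite !expsum_cons expsum_nil /letter_sign; case: c => /=; ring.
  + by rewrite !expsum_cons expsum_nil /letter_sign; case: c => /=; ring.
- apply: linking_congr; last 2 first.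
  + by rewrite !expsum_cons; ring.
  + by rewrite !expsum_cons; ring.
  by rewrite !linking_pair /= (no_ab _ _ exy) (no_ab y x) 1?e_sym // !mulr0.
Qed.

Lemma raag_endo_expsumC (T : eqType) (e : rel T) (F : T -> word T) (u v a b : T) :
  symmetric e -> raag_endo e F -> e u v -> a != b -> ~~ e a b ->
  expsum a (F u) * expsum b (F v) = expsum b (F u) * expsum a (F v).
Proof.
move=> e_sym F_endo euv nab eab.
have := raag_eq_linking e_sym nab eab (F_endo u v euv); rewrite !linking_cat.
by rewrite [linking a b (F v) + _]addrC => /addrI ->; rewrite mulrC.
Qed.

Lemma deckP (TL TG : finType) (e : rel TL) (f : TL -> TG) (mu : {perm TL}) :
  reflect ((forall u v, e (mu u) (mu v) = e u v) /\ forall u, f (mu u) = f u)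
          (mu \in deck e f).
Proof.
rewrite inE; apply: (iffP andP) => [[/forallP mu_e /forallP mu_f]|[mu_e mu_f]].
  by split=> [u v|u]; [apply/eqP/(forallP (mu_e u)) | apply/eqP].
by split; apply/forallP => u; [apply/forallP => v; rewrite mu_e | rewrite mu_f].
Qed.

Definition homology_perm (T : finType) (F : T -> word T) (s : {perm T}) : bool :=
  [forall u, forall v, expsum v (F u) == (s u == v)%:R].

Lemma homology_permP (T : finType) (F : T -> word T) (s : {perm T}) :
  reflect (forall u v, expsum v (F u) = (s u == v)%:R) (homology_perm F s).
Proof.
apply: (iffP forallP) => [Fs u v|Fs u]; first exact/eqP/(forallP (Fs u)).
by apply/forallP => v; rewrite Fs.
Qed.

Lemma homology_perm_uniq (T : finType) (F : T -> word T) (s t : {perm T}) :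
  homology_perm F s -> homology_perm F t -> s = t.
Proof.
move=> /homology_permP Fs /homology_permP Ft; apply/permP => u.
by have := Fs u (t u); rewrite Ft eqxx; case: eqP.
Qed.

Definition deck_image (T : finType) (F : T -> word T) : {perm T} :=
  odflt 1%g [pick s | homology_perm F s].

Lemma deck_imageE (T : finType) (F : T -> word T) (s : {perm T}) :
  homology_perm F s -> deck_image F = s.
Proof.
rewrite /deck_image => Fs; case: pickP => [t Ft|none] /=.
  exact: homology_perm_uniq Ft Fs.
by move: (none s); rewrite Fs.
Qed.

Lemma homology_perm_aut_eq (T : finType) (e : rel T) (F G : T -> word T) s :
  aut_eq e F G -> homology_perm F s -> homology_perm G s.
Proof.
move=> FG /homology_permP Fs; apply/homology_permP => u v.
by rewrite -(raag_eq_expsum v (FG u)).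
Qed.

Lemma homology_perm_comp (T : finType) (F G : T -> word T) (s t : {perm T}) :
  homology_perm F s -> homology_perm G t -> homology_perm (aut_comp F G) (t * s).
Proof.
move=> /homology_permP Fs /homology_permP Gt; apply/homology_permP => x v.
rewrite /aut_comp expsum_wsubst; under eq_bigr => b _ do rewrite Gt Fs.
rewrite (bigD1 (t x)) //= eqxx mul1r big1 ?addr0 ?permM // => b nb.
by rewrite eq_sym (negbTE nb) mul0r.
Qed.

Lemma homology_perm_perm_aut (T : finType) (mu : {perm T}) :
  homology_perm (perm_aut mu) mu.
Proof. by apply/homology_permP => u v; rewrite expsum_gen. Qed.

Lemma IA_homology_perm1 (T : finType) (e : rel T) (F : T -> word T) :
  raag_aut e F -> IA e F <-> homology_perm F 1.
Proof.
move=> F_aut; split=> [[_ Fid]|/homology_permP Fid].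
  by apply/homology_permP => u v; rewrite Fid perm1; case: eqP.
by split=> // u v; rewrite Fid perm1; case: eqP.
Qed.

Lemma graph_aut_endo (T : finType) (e : rel T) (mu : {perm T}) :
  (forall u v, e (mu u) (mu v) = e u v) -> raag_endo e (perm_aut mu).
Proof. by move=> mu_e x y exy; apply: (@raag_comm _ e [::] [::]); rewrite mu_e. Qed.

Lemma deck_FD (TL TG : finType) (eL : rel TL) (eG : rel TG) (f : TL -> TG) mu :
  mu \in deck eL f -> FD eL eG f (perm_aut mu).
Proof.
move=> /deckP[mu_e mu_f]; split=> [|u]; last by rewrite /= mu_f; apply: raag_refl.
split; first exact: graph_aut_endo.
exists (perm_aut mu^-1); split.
  by apply: graph_aut_endo => u v; rewrite -mu_e !permKV.
by split=> x; rewrite /wsubst /perm_aut /= ?permK ?permKV; apply: raag_refl.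
Qed.

Lemma FD_homology_perm (TL TG : finType) (eL : rel TL) (eG : rel TG) (f : TL -> TG)
    (F : TL -> word TL) :
  simple_graph eL -> simple_graph eG -> no_isolated eL ->
  covering_map eL eG f -> FD eL eG f F ->
  exists2 s, s \in deck eL f & homology_perm F s.
Proof.
move=> [eL_sym eL_irr] [_ eG_irr] eL_noiso [_ [f_edge [f_locinj _]]].
move=> [[F_endo [G [_ [GF _]]]] F_fiber].
have [|||||s [Fs s_f s_e]] := @covering_matrix_perm _ _ eL f
  (fun a u => expsum a (F u)) (fun b a => expsum b (G a)) eL_irr eL_sym eL_noiso.
- by move=> a b /f_edge; apply: contraTneq => ->; rewrite eG_irr.
- exact: f_locinj.
- move=> u v a b euv nab eab; apply/eqP; rewrite subr_eq0; apply/eqP.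
  exact: raag_endo_expsumC.
- by move=> u z; rewrite -expsum_map (raag_eq_expsum z (F_fiber u)) expsum_gen.
- move=> x b; rewrite -expsum_gen -(raag_eq_expsum b (GF x)) expsum_wsubst.
  by apply: eq_bigr => a _; rewrite mulrC.
exists s; first by apply/deckP.
by apply/homology_permP => u v; rewrite Fs.
Qed.

Theorem theorem7p3 (TL TG : finType) (eL : rel TL) (eG : rel TG)
    (f : TL -> TG) :
  simple_graph eL -> simple_graph eG ->
  no_isolated eL -> no_isolated eG ->
  regular_covering eL eG f ->
  exists psi : (TL -> word TL) -> {perm TL},
    (forall F, FD eL eG f F -> psi F \in deck eL f) /\
    (forall F G, FD eL eG f F -> FD eL eG f G -> aut_eq eL F G -> psi F = psi G) /\
    (forall F G, FD eL eG f F -> FD eL eG f G ->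
       forall u, psi (aut_comp F G) u = psi F (psi G u)) /\
    (forall mu, mu \in deck eL f -> exists2 F, FD eL eG f F & psi F = mu) /\
    (forall F, FD eL eG f F -> (psi F = 1%g <-> IA eL F)).
Proof.
move=> sL sG nL _ [cov _].
have hom F := @FD_homology_perm _ _ eL eG f F sL sG nL cov.
exists (@deck_image TL); split; [|split; [|split; [|split]]].
- by move=> F /hom[s s_deck /deck_imageE ->].
- move=> F G /hom[s _ Fs] _ FG.
  by rewrite (deck_imageE Fs) (deck_imageE (homology_perm_aut_eq FG Fs)).
- move=> F G /hom[s _ Fs] /hom[t _ Gt] u.
  rewrite (deck_imageE (homology_perm_comp Fs Gt)) permM.
  by rewrite (deck_imageE Fs) (deck_imageE Gt).
- move=> mu /deck_FD F_FD; exists (perm_aut mu); first exact: F_FD.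
  exact/deck_imageE/homology_perm_perm_aut.
- move=> F F_FD; have [s _ Fs] := hom F F_FD; rewrite (IA_homology_perm1 F_FD.1).
  by rewrite (deck_imageE Fs); split=> [<- // | /(homology_perm_uniq Fs)].
Qed.
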